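(* Let $L$ be an $n\times n$ nonsingular M-matrix with integer entries. For every $f\in\mathbb{Z}^n$ with $f\ge 0$, the problem $$\min_{g\sim f,\ g\ge 0} E(g)$$ (minimum over $g\in\mathbb{Z}^n$) has a unique solution.
   Context: A Z-matrix is a square real matrix whose off-diagonal entries are all $\le 0$. A nonsingular M-matrix is a Z-matrix $L$ that is invertible with $L^{-1}$ having all entries nonnegative. Vector inequalities are entrywise. For $f,g\in\mathbb{Z}^n$, $f\sim g$ means $g-f=Lz$ for some $z\in\mathbb{Z}^n$. For $q\in\mathbb{Z}^n$ the energy is $E(q)=\|L^{-1}q\|_2^2$, where $\|v\|_2^2=v\cdot v$. *)

From HB Require Import structures.
From mathcomp Require Import all_boot all_order all_algebra.
Set Implicit Arguments. Unset Strict Implicit. Unset Printing Implicit Defensive.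
Import Order.TTheory GRing.Theory Num.Theory.
Local Open Scope ring_scope.

Definition ratmx (n : nat) (A : 'M[int]_n) : 'M[rat]_n := map_mx (intr : int -> rat) A.
Definition ratcv (n : nat) (v : 'cV[int]_n) : 'cV[rat]_n := map_mx (intr : int -> rat) v.

Definition Zmatrix (n : nat) (L : 'M[int]_n) : Prop :=
  forall i j : 'I_n, i != j -> L i j <= 0.

Definition nonsingular_Mmatrix (n : nat) (L : 'M[int]_n) : Prop :=
  [/\ Zmatrix L, ratmx L \in unitmx &
      forall i j : 'I_n, 0 <= invmx (ratmx L) i j].

Definition nonneg_vec (n : nat) (v : 'cV[int]_n) : Prop :=
  forall i : 'I_n, 0 <= v i 0.

Definition equivL (n : nat) (L : 'M[int]_n) (f g : 'cV[int]_n) : Prop :=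
  exists z : 'cV[int]_n, g - f = L *m z.

Definition energy (n : nat) (L : 'M[int]_n) (q : 'cV[int]_n) : rat :=
  let v := invmx (ratmx L) *m ratcv q in \sum_(i < n) (v i 0) ^+ 2.

From HB Require Import structures.
From mathcomp Require Import all_boot all_order all_algebra.
From Stdlib Require Import Classical.
Set Implicit Arguments. Unset Strict Implicit. Unset Printing Implicit Defensive.
Import Order.TTheory GRing.Theory Num.Theory.
Local Open Scope ring_scope.

(* Write feasible g as g = f + L z.  Then L^-1 g = L^-1 f + z, so the energy is
   \sum_i (c_i + z_i)^2 with c = L^-1 f, and L^-1 >= 0 forces c + z >= 0.
   Because L is a Z-matrix, the feasible z are closed under entrywise minimum;
   being bounded below by -c, they have a least element z0.  Every term of the
   energy is increasing in z_i on the feasible region, so f + L z0 minimizes the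
   energy, and any other feasible z with the same energy must equal z0. *)

Section SumOfSquares.
Variables (R : numDomainType) (n : nat) (x y : 'cV[R]_n).
Hypothesis le_xy : forall i, 0 <= x i 0 <= y i 0.

Lemma ler_sqr_col i : x i 0 ^+ 2 <= y i 0 ^+ 2.
Proof.
have /andP [x_ge0 xy] := le_xy i.
by rewrite ler_pXn2r // nnegrE (le_trans x_ge0 xy).
Qed.

Lemma ler_sum_sqr_col : \sum_i x i 0 ^+ 2 <= \sum_i y i 0 ^+ 2.
Proof. by apply: ler_sum => i _; apply: ler_sqr_col. Qed.

Lemma sum_sqr_col_eq : \sum_i y i 0 ^+ 2 <= \sum_i x i 0 ^+ 2 -> x = y.
Proof.
move=> le_yx; have eq_sum : \sum_i (y i 0 ^+ 2 - x i 0 ^+ 2) = 0.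
  by apply/eqP; rewrite sumrB subr_eq0 eq_le le_yx ler_sum_sqr_col.
have diff_ge0 i : true -> 0 <= y i 0 ^+ 2 - x i 0 ^+ 2.
  by rewrite subr_ge0 ler_sqr_col.
apply/matrixP => i j; rewrite (ord1 j).
have /andP [x_ge0 xy] := le_xy i.
move/eqP: (psumr_eq0P diff_ge0 eq_sum (i := i) isT).
by rewrite subr_eq0 eqrXn2 // ?(le_trans x_ge0 xy) // => /eqP ->.
Qed.

End SumOfSquares.

Section LeastElement.
Variable n : nat.

Definition min_col (z w : 'cV[int]_n) : 'cV[int]_n :=
  \col_i Num.min (z i 0) (w i 0).

Variables (P : 'cV[int]_n -> Prop) (b : 'cV[int]_n).
Hypothesis P_min : forall z w, P z -> P w -> P (min_col z w).
Hypothesis P_lbound : forall z, P z -> forall i, b i 0 <= z i 0.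

Definition height (z : 'cV[int]_n) : nat := (\sum_i `|(z i 0 - b i 0)%R|)%N.

Lemma height_min_col z w i : P z -> P w -> w i 0 < z i 0 ->
  (height (min_col z w) < height z)%N.
Proof.
move=> Pz Pw lt_wz; have Pm := P_min Pz Pw.
rewrite /height (bigD1 i) // [X in (_ < X)%N](bigD1 i) //= -addSn.
apply: leq_add.
  rewrite -ltz_nat !abszE !ger0_norm ?subr_ge0 ?P_lbound //.
  by rewrite mxE min_r ?ltW // ltrD2r.
apply: leq_sum => j _; rewrite -lez_nat !abszE !ger0_norm ?subr_ge0 ?P_lbound //.
by rewrite lerD2r mxE ge_min lexx.
Qed.

Lemma exists_least_col z : P z ->
  exists2 z0, P z0 & forall w, P w -> forall i, z0 i 0 <= w i 0.
Proof.
elim: (height z).+1 {-2}z (ltnSn (height z)) => [//|k IH] {}z lt_zk Pz.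
case: (classic (exists2 w, P w & exists i, w i 0 < z i 0)) => [[w Pw [i lt_wz]]|none].
  apply: (IH (min_col z w)); last exact: P_min Pz Pw.
  by rewrite -ltnS (leq_trans _ lt_zk) // ltnS (height_min_col Pz Pw lt_wz).
exists z => // w Pw i; rewrite leNgt; apply/negP => lt_wz.
by apply: none; exists w => //; exists i.
Qed.

End LeastElement.

Lemma ratcv_inj n : injective (@ratcv n).
Proof.
move=> u v /matrixP eq_uv; apply/matrixP => i j.
by move/eqP: (eq_uv i j); rewrite !mxE eqr_int => /eqP.
Qed.

Section Feasibility.
Variables (n : nat) (L : 'M[int]_n) (f : 'cV[int]_n).

Definition feasible (z : 'cV[int]_n) : Prop := nonneg_vec (f + L *m z).

Lemma Zmatrix_row_le (z m : 'cV[int]_n) i : Zmatrix L ->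
  (forall j, m j 0 <= z j 0) -> m i 0 = z i 0 -> (L *m z) i 0 <= (L *m m) i 0.
Proof.
move=> ZL le_mz eq_i; rewrite !mxE; apply: ler_sum => j _.
have [<-|ne_ij] := eqVneq i j; first by rewrite eq_i.
by apply: ler_wnM2l; [exact: ZL | exact: le_mz].
Qed.

Lemma feasible_min_col : Zmatrix L ->
  forall z w, feasible z -> feasible w -> feasible (min_col z w).
Proof.
move=> ZL z w Fz Fw i.
have row_ge (u : 'cV[int]_n) : feasible u -> min_col z w i 0 = u i 0 ->
    (forall j, min_col z w j 0 <= u j 0) -> 0 <= (f + L *m min_col z w) i 0.
  move=> Fu eq_i le_mu; apply: le_trans (Fu i) _.
  by rewrite [leLHS]mxE [leRHS]mxE lerD2l Zmatrix_row_le.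
have [le_zw|lt_wz] := leP (z i 0) (w i 0).
- apply: (row_ge z) => [//||j]; rewrite mxE; first exact: min_l.
  by rewrite ge_min lexx.
- apply: (row_ge w) => [//||j]; rewrite mxE; first exact/min_r/ltW.
  by rewrite ge_min lexx orbT.
Qed.

Let c : 'cV[rat]_n := invmx (ratmx L) *m ratcv f.

Lemma invmx_ratcv_feasible z : ratmx L \in unitmx ->
  invmx (ratmx L) *m ratcv (f + L *m z) = c + ratcv z.
Proof. by move=> uL; rewrite /ratcv /ratmx map_mxD map_mxM mulmxDr mulKmx. Qed.

Lemma energy_feasible z : ratmx L \in unitmx ->
  energy L (f + L *m z) = \sum_i (c + ratcv z) i 0 ^+ 2.
Proof. by move=> uL; rewrite /energy invmx_ratcv_feasible. Qed.

Hypothesis ML : nonsingular_Mmatrix L.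

Lemma Mmatrix_inv_nonneg (g : 'cV[int]_n) : nonneg_vec g ->
  forall i, 0 <= (invmx (ratmx L) *m ratcv g) i 0.
Proof.
case: ML => _ _ inv_ge0 g_ge0 i; rewrite mxE; apply: sumr_ge0 => j _.
by rewrite mulr_ge0 // /ratcv mxE ler0z.
Qed.

Lemma feasible_shift_ge0 z : feasible z -> forall i, 0 <= (c + ratcv z) i 0.
Proof.
case: (ML) => _ uL _ Fz i.
by rewrite -invmx_ratcv_feasible //; apply: Mmatrix_inv_nonneg.
Qed.

Lemma feasible_lbound z : feasible z ->
  forall i, (\col_j Num.floor (- c j 0)) i 0 <= z i 0.
Proof.
move=> Fz i; rewrite mxE -(ler_int rat); apply: le_trans (floor_le _) _.
by rewrite lerNl -subr_ge0 opprK; have := feasible_shift_ge0 Fz i; rewrite !mxE.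
Qed.

End Feasibility.

Theorem mainTheorem3 (n : nat) (L : 'M[int]_n) (f : 'cV[int]_n) :
  nonsingular_Mmatrix L -> nonneg_vec f ->
  exists! g : 'cV[int]_n,
    [/\ nonneg_vec g, equivL L f g &
        forall h : 'cV[int]_n, nonneg_vec h -> equivL L f h ->
          energy L g <= energy L h].
Proof.
move=> ML f_ge0; have [ZL uL _] := ML.
have F0 : feasible L f 0 by rewrite /feasible mulmx0 addr0.
have [z0 Fz0 least] :=
  exists_least_col (feasible_min_col ZL) (feasible_lbound ML) F0.
have equivE h : equivL L f h -> exists z, h = f + L *m z.
  by case=> z Ez; exists z; rewrite -Ez addrC subrK.
have equiv_f z : equivL L f (f + L *m z) by exists z; rewrite addrAC subrr add0r.
set c := invmx (ratmx L) *m ratcv f.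
have le_shift z : feasible L f z ->
    forall i, 0 <= (c + ratcv z0) i 0 <= (c + ratcv z) i 0.
  move=> Fz i; rewrite feasible_shift_ge0 //= !mxE lerD2l ler_int.
  exact: least.
exists (f + L *m z0); split.
  split=> // h h_ge0 /equivE [z Eh]; subst h.
  by rewrite !energy_feasible //; apply: ler_sum_sqr_col; apply: le_shift.
move=> g [g_ge0 /equivE [z Eg] g_min]; subst g.
have : energy L (f + L *m z) <= energy L (f + L *m z0) by exact: g_min.
rewrite !energy_feasible // => /(sum_sqr_col_eq (le_shift z g_ge0)).
by move=> /addrI/ratcv_inj ->.
Qed.
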